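(* In the setting of the context, fix a feasible basis and distinct integers $r,s$ with $0\le r,s\le d$. The following are equivalent: (i) in $\Delta$, vertex $r$ is adjacent to vertex $s$ and to no other vertex; (ii) $a^*_r\ne\theta^*_0$ and $$u_i(\theta_s)=u_i(\theta_r)\,\frac{\theta^*_i-a^*_r}{\theta^*_0-a^*_r}\qquad(0\le i\le d).$$
   Context: Let $\mathbb F$ be a field, $d\ge1$, $V$ an $\mathbb F$-vector space of dimension $d+1$, $\mathcal A=\mathrm{End}(V)$ with identity $I$. Let $E^*_0,\dots,E^*_d\in\mathcal A$ satisfy $E^*_iE^*_j=\delta_{i,j}E^*_i$, $\mathrm{rank}(E^*_i)=1$. Let $A\in\mathcal A$ satisfy $E^*_iAE^*_j=0$ if $|i-j|>1$ and $\neq0$ if $|i-j|=1$. Assume $A$ has $d+1$ distinct eigenvalues $\theta_0,\dots,\theta_d\in\mathbb F$ with primitive idempotents $E_i=\prod_{j\ne i}\frac{A-\theta_jI}{\theta_i-\theta_j}$. Let $\theta^*_i\in\mathbb F$, $A^*=\sum_i\theta^*_iE^*_i$, $a^*_i=\mathrm{tr}(E_iA^* )$. Let $\Delta$ be the graph on $\{0,\dots,d\}$ with $i\sim j$ iff $i\ne j$ and $E_iA^*E_j\ne0$. A basis $v_0,\dots,v_d$ of $V$ is feasible if $v_i\in E^*_iV$ for all $i$; then $Av_i=b_{i-1}v_{i-1}+a_iv_i+c_{i+1}v_{i+1}$ ($v_{-1}=v_{d+1}=0$), with $a_i=\mathrm{tr}(E^*_iA)$, nonzero $b_0,\dots,b_{d-1}$,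 $c_1,\dots,c_d$, and $b_d=c_0=0$. Define $u_0,\dots,u_{d+1}\in\mathbb F[\lambda]$ by $u_{-1}=0$, $u_0=1$, $\lambda u_i=c_iu_{i-1}+a_iu_i+b_iu_{i+1}$ $(0\le i\le d-1)$, $\lambda u_d=c_du_{d-1}+a_du_d+u_{d+1}/(b_0\cdots b_{d-1})$. *)

(* End(V) is modelled as 'M[F]_(d.+1) acting on column
   vectors 'cV[F]_(d.+1) (V = F^(d+1)); all index families are nat-indexed,
   only indices 0..d being relevant. *)
From HB Require Import structures.
From mathcomp Require Import all_boot all_order all_algebra.
Set Implicit Arguments. Unset Strict Implicit. Unset Printing Implicit Defensive.
Import Order.TTheory GRing.Theory Num.Theory.
Local Open Scope ring_scope.

Section Defs.
Variables (F : fieldType) (d : nat).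

Definition primidem (A : 'M[F]_(d.+1)) (theta : nat -> F) (i : nat) : 'M[F]_(d.+1) :=
  \prod_(j < d.+1 | (j : nat) != i) ((theta i - theta j)^-1 *: (A - (theta j)%:M)).

Definition Astar (Es : nat -> 'M[F]_(d.+1)) (thetas : nat -> F) : 'M[F]_(d.+1) :=
  \sum_(i < d.+1) thetas i *: Es i.

Definition astar (A : 'M[F]_(d.+1)) (theta : nat -> F)
    (Es : nat -> 'M[F]_(d.+1)) (thetas : nat -> F) (i : nat) : F :=
  \tr (primidem A theta i *m Astar Es thetas).

Definition acoef (Es : nat -> 'M[F]_(d.+1)) (A : 'M[F]_(d.+1)) (i : nat) : F :=
  \tr (Es i *m A).

Definition Delta_adj (A : 'M[F]_(d.+1)) (theta : nat -> F)
    (Es : nat -> 'M[F]_(d.+1)) (thetas : nat -> F) (i j : nat) : Prop :=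
  i <> j /\ primidem A theta i *m Astar Es thetas *m primidem A theta j != 0.

End Defs.

(* upair a b c n = (u_{n-1}, u_n), from u_{-1} = 0, u_0 = 1 and
   lambda u_i = c_i u_{i-1} + a_i u_i + b_i u_{i+1}, i.e.
   u_{i+1} = b_i^{-1} ((lambda - a_i) u_i - c_i u_{i-1})  (0 <= i <= d-1). *)
Fixpoint upair (F : fieldType) (a b c : nat -> F) (n : nat) : {poly F} * {poly F} :=
  match n with
  | 0 => (0, 1)
  | k.+1 => let: (p, q) := upair a b c k in
            (q, (b k)^-1 *: (('X - (a k)%:P) * q - c k *: p))
  end.

Definition upoly (F : fieldType) (a b c : nat -> F) (n : nat) : {poly F} :=
  (upair a b c n).2.

From HB Require Import structures.
From mathcomp Require Import all_boot all_order all_algebra.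
From mathcomp Require Import ring.
Set Implicit Arguments. Unset Strict Implicit. Unset Printing Implicit Defensive.
Import Order.TTheory GRing.Theory Num.Theory.
Local Open Scope ring_scope.

(* In the coordinates of the feasible basis, A acts as the
   tridiagonal operator T (Ty)_j = c_j y_(j-1) + a_j y_j + b_j y_(j+1) and
   Astar as the diagonal operator D y = (theta*_i y_i)_i.  The sequences
   X_m = (u_i(theta_m))_i are the coordinates of theta_m-eigenvectors w_m of A.
   T is self-adjoint for the diagonal form beta(x, y) = sum_i k_i x_i y_i with
   k_i = (b_0 ... b_(i-1)) / (c_1 ... c_i), so X_0, ..., X_d is a beta-orthogonal
   basis of anisotropic vectors, and E_r is the beta-orthogonal projection on
   X_r.  Hence r ~ j in Delta iff beta(X_j, D X_r) <> 0, and
   a*_r = beta(X_r, D X_r) / beta(X_r, X_r).  Expanding D X_r in the basis X,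
   condition (i) says D X_r = a*_r X_r + g X_s with g <> 0; evaluating at i = 0,
   where u_0 = 1, gives g = theta*_0 - a*_r, which is condition (ii). *)

Lemma neq_inord (n r : nat) (m : 'I_n.+1) :
  (r <= n)%N -> (m != inord r) = (m != r :> nat).
Proof. by move=> hr; rewrite -val_eqE /= inordK. Qed.

Lemma sum_ord_pick (V : zmodType) (n : nat) (f : nat -> V) (r : nat) :
  (r <= n)%N -> (forall m, (m <= n)%N -> m != r -> f m = 0) ->
  \sum_(m < n.+1) f m = f r.
Proof.
move=> hr hf; rewrite (bigD1 (inord r)) //= inordK // big1 ?addr0 // => m.
by rewrite neq_inord //; apply: hf; rewrite -ltnS.
Qed.

Lemma sum_ord_pick2 (V : zmodType) (n : nat) (f : nat -> V) (r s : nat) :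
  (r <= n)%N -> (s <= n)%N -> r != s ->
  (forall m, (m <= n)%N -> m != r -> m != s -> f m = 0) ->
  \sum_(m < n.+1) f m = f r + f s.
Proof.
move=> hr hs hrs hf; rewrite (bigD1 (inord r)) //= (bigD1 (inord s)) /=; last first.
  by rewrite neq_inord // inordK // eq_sym.
rewrite !inordK // big1 ?addr0 // => m /andP [].
by rewrite !neq_inord //; apply: hf; rewrite -ltnS.
Qed.

Section LinearCombinations.
Variables (F : fieldType) (n : nat) (f : nat -> 'cV[F]_n.+1).

Definition lincomb (y : nat -> F) : 'cV[F]_n.+1 := \sum_(i < n.+1) y i *: f i.

Definition basis_mx : 'M[F]_n.+1 := \matrix_(i < n.+1, k < n.+1) f i k 0.

Lemma lincomb_ext (y y' : nat -> F) :
  (forall i, (i <= n)%N -> y i = y' i) -> lincomb y = lincomb y'.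
Proof. by move=> h; apply: eq_bigr => i _; rewrite h // -ltnS. Qed.

Lemma lincombZ (t : F) (y : nat -> F) : lincomb (fun i => t * y i) = t *: lincomb y.
Proof. by rewrite /lincomb scaler_sumr; apply: eq_bigr => i _; rewrite scalerA. Qed.

Lemma lincombB (y y' : nat -> F) : lincomb (fun i => y i - y' i) = lincomb y - lincomb y'.
Proof. by rewrite /lincomb -sumrB; apply: eq_bigr => i _; rewrite scalerBl. Qed.

Lemma lincomb_comp (al : nat -> F) (Y : nat -> nat -> F) :
  lincomb (fun i => \sum_(m < n.+1) al m * Y m i)
  = \sum_(m < n.+1) al m *: lincomb (Y m).
Proof.
rewrite /lincomb; under eq_bigr do rewrite scaler_suml.
rewrite exchange_big; apply: eq_bigr => m _; rewrite scaler_sumr.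
by apply: eq_bigr => i _; rewrite scalerA.
Qed.

Lemma trmx_mul_basis_mx (u : 'rV[F]_n.+1) :
  (u *m basis_mx)^T = lincomb (fun i => u 0 (inord i)).
Proof.
apply/matrixP => k j; rewrite !mxE summxE; apply: eq_bigr => i _.
by rewrite !mxE (ord1 j) inord_val.
Qed.

Lemma row_basis_mx (i : 'I_n.+1) : row i basis_mx = (f i)^T.
Proof. by apply/matrixP => k j; rewrite !mxE (ord1 k). Qed.

Lemma basis_mxP :
  basis_mx \in unitmx <-> (forall y, lincomb y = 0 -> forall i, (i <= n)%N -> y i = 0).
Proof.
split=> [hU y hy i hi | hfree].
  pose u : 'rV[F]_n.+1 := \row_j y j.
  have : u *m basis_mx = 0.
    apply: trmx_inj; rewrite trmx_mul_basis_mx trmx0 -[RHS]hy.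
    by apply: lincomb_ext => j hj; rewrite mxE inordK.
  move/(congr1 (mulmx^~ (invmx basis_mx))); rewrite mulmxK // mul0mx.
  by move/matrixP/(_ 0 (inord i)); rewrite !mxE inordK.
rewrite -row_free_unit -kermx_eq0; apply/eqP/row_matrixP => k; rewrite row0.
set u := row k _; have hu : u *m basis_mx = 0 by rewrite -row_mul mulmx_ker row0.
apply/rowP => j; rewrite [RHS]mxE.
have := hfree (fun i => u 0 (inord i)) _ j (ltn_ord j); rewrite inord_val; apply.
by rewrite -trmx_mul_basis_mx hu trmx0.
Qed.

Hypothesis f_basis : basis_mx \in unitmx.

Lemma lincomb_inj (y y' : nat -> F) :
  lincomb y = lincomb y' -> forall i, (i <= n)%N -> y i = y' i.
Proof.
move=> h i hi; apply/eqP; rewrite -subr_eq0; apply/eqP.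
by apply: (basis_mxP.1 f_basis (fun i => y i - y' i)) => //; rewrite lincombB h subrr.
Qed.

Lemma lincomb_surj (z : 'cV[F]_n.+1) : exists y : nat -> F, z = lincomb y.
Proof.
have -> : z = (z^T *m invmx basis_mx *m basis_mx)^T by rewrite mulmxKV ?trmxK.
by rewrite trmx_mul_basis_mx; eexists.
Qed.

Lemma mx_eq0_on_basis (M : 'M[F]_n.+1) :
  (forall m, (m <= n)%N -> M *m f m = 0) -> M = 0.
Proof.
move=> hM; have hBM : basis_mx *m M^T = 0.
  apply/row_matrixP => m; rewrite row_mul row_basis_mx row0 -trmx_mul hM ?trmx0 //.
  by rewrite -ltnS.
by rewrite -[M]trmxK -[M^T](mulKmx f_basis) hBM mulmx0 trmx0.
Qed.

Lemma mxtrace_on_basis (M : 'M[F]_n.+1) (r : nat) (lam : nat -> F) :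
  (r <= n)%N -> (forall m, (m <= n)%N -> M *m f m = lam m *: f r) -> \tr M = lam r.
Proof.
move=> hr hM; set Q := basis_mx^T; have hQ : Q \in unitmx by rewrite unitmx_tr.
have MQ : M *m Q = f r *m \row_(m < n.+1) lam m.
  apply/matrixP => i m; rewrite !mxE big_ord1 !mxE mulrC.
  have := congr1 (fun N : 'cV[F]_n.+1 => N i 0) (hM m (ltn_ord m)).
  by rewrite !mxE => <-; apply: eq_bigr => t _; rewrite !mxE.
have Qr : invmx Q *m f r = delta_mx (inord r) 0.
  have <- : Q *m delta_mx (inord r) 0 = f r.
    by rewrite -colE; apply/matrixP => i j; rewrite !mxE (ord1 j) inordK.
  by rewrite mulKmx.
rewrite -[M]mulmx1 -(mulmxV hQ) mulmxA MQ -mulmxA mxtrace_mulC -mulmxA Qr -colE.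
by rewrite /mxtrace big_ord1 !mxE inordK.
Qed.

End LinearCombinations.

(* An eigenvalue in the sense of mxalgebra (a nonzero left eigenspace) also
   has a nonzero right, i.e. column, eigenvector. *)
Lemma col_eigenvector (F : fieldType) (n : nat) (M : 'M[F]_n) (t : F) :
  eigenvalue M t -> exists2 z : 'cV[F]_n, M *m z = t *: z & z != 0.
Proof.
case/eigenvalueP => u hu unz.
have /det0P [z' z'nz hz'] : \det (t%:M - M)^T == 0.
  rewrite det_tr; apply/det0P; exists u => //.
  by rewrite mulmxBr mul_mx_scalar hu subrr.
exists z'^T; last by rewrite trmx_eq0.
have h0 : (t%:M - M) *m z'^T = 0 by rewrite -[t%:M - M]trmxK -trmx_mul hz' trmx0.
by apply/eqP; rewrite eq_sym -subr_eq0 -mul_scalar_mx -mulmxBl h0.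
Qed.

Section PrimitiveIdempotents.
Variables (F : fieldType) (d : nat) (A : 'M[F]_d.+1) (theta : nat -> F).

Lemma primidem_eigen (j : nat) (z : 'cV[F]_d.+1) (lam : F) :
  A *m z = lam *: z ->
  primidem A theta j *m z =
  (\prod_(l < d.+1 | (l : nat) != j) ((theta j - theta l)^-1 * (lam - theta l))) *: z.
Proof.
move=> hz; rewrite /primidem.
apply: (big_rec2 (fun (X : 'M[F]_d.+1) (cf : F) => X *m z = cf *: z)).
  by rewrite mul1mx scale1r.
move=> l X cf _ IH.
rewrite -mulmxE -mulmxA IH -scalemxAr -scalemxAl mulmxBl hz mul_scalar_mx.
by rewrite -scalerBl !scalerA; congr (_ *: _); ring.
Qed.

Hypothesis theta_inj :
  forall i j, (i <= d)%N -> (j <= d)%N -> theta i = theta j -> i = j.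

Lemma primidem_on (j k : nat) (z : 'cV[F]_d.+1) :
  (j <= d)%N -> (k <= d)%N -> A *m z = theta k *: z ->
  primidem A theta j *m z = if k == j then z else 0.
Proof.
move=> hj hk hz; rewrite (primidem_eigen j hz).
case: eqP => [->|hkj].
  rewrite big1 ?scale1r // => l hl; rewrite mulVf // subr_eq0.
  by apply: contra hl => /eqP /theta_inj -> //; rewrite -ltnS.
rewrite (bigD1 (inord k)) /=; last by rewrite inordK //; apply/eqP.
by rewrite inordK // subrr mulr0 mul0r scale0r.
Qed.

End PrimitiveIdempotents.

Section DiagonalForms.
Variables (F : fieldType) (d : nat) (k : nat -> F).

Definition wform (x y : nat -> F) : F := \sum_(i < d.+1) k i * x i * y i.

Lemma wform_ext (x y y' : nat -> F) :
  (forall i, (i <= d)%N -> y i = y' i) -> wform x y = wform x y'.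
Proof. by move=> h; apply: eq_bigr => i _; rewrite h // -ltnS. Qed.

Lemma wform_sym (x y : nat -> F) : wform x y = wform y x.
Proof. by apply: eq_bigr => i _; ring. Qed.

Lemma wform_scaler (x y : nat -> F) (t : F) :
  wform x (fun i => t * y i) = t * wform x y.
Proof. by rewrite /wform mulr_sumr; apply: eq_bigr => i _; ring. Qed.

Lemma wform_sumr (x : nat -> F) (al : nat -> F) (X : nat -> nat -> F) :
  wform x (fun i => \sum_(m < d.+1) al m * X m i) = \sum_(m < d.+1) al m * wform x (X m).
Proof.
rewrite /wform; under eq_bigr do rewrite mulr_sumr.
rewrite exchange_big; apply: eq_bigr => m _; rewrite mulr_sumr.
by apply: eq_bigr => i _; ring.
Qed.

Lemma wform_combr (x y z : nat -> F) (p q : F) :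
  wform x (fun i => p * y i + q * z i) = p * wform x y + q * wform x z.
Proof. by rewrite /wform !mulr_sumr -big_split; apply: eq_bigr => i _ /=; ring. Qed.

Lemma wform_diag_sym (t x y : nat -> F) :
  wform x (fun i => t i * y i) = wform y (fun i => t i * x i).
Proof. by apply: eq_bigr => i _; ring. Qed.

Section OrthogonalFamily.
Variable X : nat -> nat -> F.
Hypothesis X_orth :
  forall j m, (j <= d)%N -> (m <= d)%N -> j != m -> wform (X j) (X m) = 0.
Hypothesis X_span : forall y : nat -> F, exists al : nat -> F,
  forall i, (i <= d)%N -> y i = \sum_(m < d.+1) al m * X m i.

Lemma wform_coef (y al : nat -> F) :
  (forall i, (i <= d)%N -> y i = \sum_(m < d.+1) al m * X m i) ->
  forall j, (j <= d)%N -> wform (X j) y = al j * wform (X j) (X j).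
Proof.
move=> hy j hj; rewrite (wform_ext _ hy) wform_sumr.
rewrite (@sum_ord_pick _ _ (fun m => al m * wform (X j) (X m)) j) //.
by move=> m hm hmj; rewrite X_orth ?mulr0 // eq_sym.
Qed.

Lemma wform_norm_neq0 (m i : nat) :
  (m <= d)%N -> (i <= d)%N -> k i != 0 -> X m i != 0 -> wform (X m) (X m) != 0.
Proof.
move=> hm hi hki hXmi; pose e l : F := (l == i)%:R.
have [al hal] := X_span e.
have := wform_coef hal hm; rewrite {1}/wform.
rewrite (@sum_ord_pick _ _ (fun l => k l * X m l * e l) i) //; last first.
  by move=> l _ /negbTE hl; rewrite /e hl mulr0.
rewrite /e eqxx mulr1 => hal_m; apply: contra (mulf_neq0 hki hXmi).
by rewrite hal_m => /eqP ->; rewrite mulr0.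
Qed.

Hypothesis X_norm : forall m, (m <= d)%N -> wform (X m) (X m) != 0.

Lemma wform_expansion (y : nat -> F) :
  forall i, (i <= d)%N ->
  y i = \sum_(m < d.+1) (wform (X m) y / wform (X m) (X m)) * X m i.
Proof.
have [al hal] := X_span y; move=> i hi; rewrite hal //.
by apply: eq_bigr => m _; rewrite (wform_coef hal) ?mulfK ?X_norm // -ltnS.
Qed.

Lemma two_term_expansion (r s : nat) (y : nat -> F) :
  (r <= d)%N -> (s <= d)%N -> r <> s ->
  (forall j, (j <= d)%N -> (r <> j /\ wform (X j) y != 0) <-> j = s) <->
  exists2 g : F, g != 0 &
    forall i, (i <= d)%N -> y i = wform (X r) y / wform (X r) (X r) * X r i + g * X s i.
Proof.
move=> hr hs hrs; split=> [H | [g gnz hy] j hj].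
  have hys : wform (X s) y != 0 by case: ((H s hs).2 erefl).
  exists (wform (X s) y / wform (X s) (X s)); first by rewrite mulf_neq0 ?invr_eq0 ?X_norm.
  move=> i hi; rewrite (wform_expansion _ hi).
  rewrite (@sum_ord_pick2 _ _ (fun m => wform (X m) y / wform (X m) (X m) * X m i) r s) //.
    exact/eqP.
  move=> m hm /eqP hmr /eqP hms; case: (eqVneq (wform (X m) y) 0) => [->|hy].
    by rewrite !mul0r.
  by have := (H m hm).1 (conj (nesym hmr) hy).
have hsr : s != r by apply/eqP => /esym.
rewrite (wform_ext _ hy) wform_combr; split=> [[hrj] | ->].
  case: (eqVneq j s) => // hjs; have hjr : j != r by apply/eqP => /esym.
  by rewrite (X_orth hj hr hjr) (X_orth hj hs hjs) !mulr0 addr0 eqxx.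
rewrite (X_orth hs hr hsr) mulr0 add0r; split=> //.
by rewrite mulf_neq0 ?X_norm.
Qed.

End OrthogonalFamily.
End DiagonalForms.

Lemma sum_three_shifts (V : zmodType) (d : nat) (S F G H : nat -> V) :
  (forall i, (i <= d)%N ->
     S i = (if i is i'.+1 then F i' else 0) + G i + (if (i < d)%N then H i else 0)) ->
  \sum_(i < d.+1) S i = \sum_(i < d) F i + \sum_(i < d.+1) G i + \sum_(i < d) H i.
Proof.
move=> hS; under eq_bigr => i _ do rewrite (hS i (ltn_ord i)).
rewrite !big_split /=; congr (_ + _ + _).
  by rewrite big_ord_recl /= add0r; apply: eq_bigr => i _.
by rewrite big_ord_recr /= ltnn addr0; apply: eq_bigr => i _; rewrite /= ltn_ord.
Qed.

Section Tridiagonal.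
Variables (F : fieldType) (d : nat) (a b c : nat -> F).

(* The tridiagonal operator (Ty)_j = c_j y_{j-1} + a_j y_j + b_j y_{j+1} on
   sequences indexed by 0..d: the matrix of A in a feasible basis. *)
Definition tridiag (y : nat -> F) (j : nat) : F :=
  (if j is j'.+1 then c j * y j' else 0) + a j * y j
  + (if (j < d)%N then b j * y j.+1 else 0).

Definition useq (t : F) (i : nat) : F := (upoly a b c i).[t].

Lemma useq0 (t : F) : useq t 0 = 1.
Proof. by rewrite /useq /upoly /= hornerC. Qed.

Lemma tridiag_scale (x y : nat -> F) (t : F) :
  (forall i, (i <= d)%N -> y i = t * x i) ->
  forall j, (j <= d)%N -> tridiag y j = t * tridiag x j.
Proof.
move=> h j hj; rewrite /tridiag (h j hj).
case: j hj => [|j] hj /=.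
  by case: ifP => h0; [rewrite (h 1%N h0) | ]; ring.
rewrite (h j (ltnW hj)).
by case: ifP => h0; [rewrite (h j.+2 h0) | ]; ring.
Qed.

Hypothesis b_neq0 : forall i, (i < d)%N -> b i != 0.

Lemma recurrence_solution (y : nat -> F) (t : F) :
  (forall j, (j < d)%N -> tridiag y j = t * y j) ->
  forall i, (i <= d)%N -> y i = y 0%N * useq t i.
Proof.
move=> hT.
suff H : forall i, (i <= d)%N -> y i = y 0%N * (upair a b c i).2.[t] /\
   (if i is i'.+1 then y i' else 0) = y 0%N * (upair a b c i).1.[t].
  by move=> i hi; case: (H i hi).
elim=> [|i IH] hi /=; first by rewrite !hornerE.
case: (IH (ltnW hi)); case: (upair a b c i) => p q /= e1 e2; split=> //.
have := hT i hi; rewrite /tridiag hi.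
have -> : (if i is i'.+1 then c i * y i' else 0) = c i * (if i is i'.+1 then y i' else 0).
  by case: (i) => [|?]; rewrite ?mulr0.
rewrite e1 e2 => E; have hbi := b_neq0 hi.
have -> : y i.+1 = (t * (y 0%N * q.[t]) - c i * (y 0%N * p.[t])
                    - a i * (y 0%N * q.[t])) / b i.
  by rewrite -E; field.
by rewrite hornerZ hornerD hornerN hornerM hornerZ hornerXsubC; field.
Qed.

(* Weights k_i = (b_0 ... b_{i-1}) / (c_1 ... c_i) making T self-adjoint. *)
Fixpoint symweight (i : nat) : F :=
  if i is i'.+1 then symweight i' * b i' / c i else 1.

Hypothesis c_neq0 : forall i, (1 <= i <= d)%N -> c i != 0.

(* beta(x, Ty) = beta(Tx, y): the three-term sums match up to a shift, since
   k_(i+1) c_(i+1) = k_i b_i. *)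
Lemma tridiag_selfadjoint (x y : nat -> F) :
  wform d symweight x (tridiag y) = wform d symweight (tridiag x) y.
Proof.
set k := symweight.
rewrite /wform (@sum_three_shifts _ d (fun i => k i * x i * tridiag y i)
   (fun i => k i.+1 * x i.+1 * c i.+1 * y i) (fun i => k i * x i * a i * y i)
   (fun i => k i * x i * b i * y i.+1)); last first.
  by move=> [|i] hi; rewrite /tridiag /=; case: ifP => _; ring.
rewrite (@sum_three_shifts _ d (fun i => k i * tridiag x i * y i)
   (fun i => k i.+1 * c i.+1 * x i * y i.+1) (fun i => k i * a i * x i * y i)
   (fun i => k i * b i * x i.+1 * y i)); last first.
  by move=> [|i] hi; rewrite /tridiag /=; case: ifP => _; ring.
have kS (i : 'I_d) : k i.+1 * c i.+1 = k i * b i.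
  by rewrite /k /=; have := @c_neq0 i.+1; rewrite ltn_ord => /(_ isT) h; field.
have -> : \sum_(i < d) k i.+1 * x i.+1 * c i.+1 * y i = \sum_(i < d) k i * b i * x i.+1 * y i.
  by apply: eq_bigr => i _; rewrite -kS; ring.
have -> : \sum_(i < d) k i * x i * b i * y i.+1 = \sum_(i < d) k i.+1 * c i.+1 * x i * y i.+1.
  by apply: eq_bigr => i _; rewrite kS; ring.
have -> : \sum_(i < d.+1) k i * x i * a i * y i = \sum_(i < d.+1) k i * a i * x i * y i.
  by apply: eq_bigr => i _; ring.
by rewrite addrC [_ + \sum_(i < d.+1) _]addrC addrA.
Qed.

End Tridiagonal.

Section FeasibleBasis.
Variables (F : fieldType) (d : nat) (Es : nat -> 'M[F]_d.+1) (A : 'M[F]_d.+1)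
  (theta thetas : nat -> F) (v : nat -> 'cV[F]_d.+1) (b c : nat -> F).

Hypothesis hEidem : forall i j, (i <= d)%N -> (j <= d)%N ->
  Es i *m Es j = if i == j then Es i else 0.
Hypothesis htheta_eig : forall i, (i <= d)%N -> eigenvalue A (theta i).
Hypothesis htheta_inj :
  forall i j, (i <= d)%N -> (j <= d)%N -> theta i = theta j -> i = j.
Hypothesis hvbasis : (\matrix_(k < d.+1, i < d.+1) v i k ord0) \in unitmx.
Hypothesis hvfeas :
  forall i, (i <= d)%N -> exists w : 'cV[F]_(d.+1), v i = Es i *m w.
Hypothesis hAv : forall i, (i <= d)%N ->
  A *m v i = (if i is i'.+1 then b i' *: v i' else 0) + acoef Es A i *: v i
             + (if (i < d)%N then c i.+1 *: v i.+1 else 0).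
Hypothesis hb : forall i, (i < d)%N -> b i != 0.
Hypothesis hc : forall i, (1 <= i <= d)%N -> c i != 0.

Local Notation T := (tridiag d (acoef Es A) b c).
Local Notation X m := (useq (acoef Es A) b c (theta m)).
Local Notation w m := (lincomb v (X m)).
Local Notation beta := (wform d (symweight b c)).
Local Notation D y := (fun i => thetas i * y i).

Lemma v_basis : basis_mx v \in unitmx.
Proof.
have -> : basis_mx v = (\matrix_(k < d.+1, i < d.+1) v i k ord0)^T.
  by apply/matrixP => i j; rewrite !mxE.
by rewrite unitmx_tr.
Qed.

Lemma A_lincomb (y : nat -> F) : A *m lincomb v y = lincomb v (T y).
Proof.
rewrite /lincomb mulmx_sumr.
rewrite (@sum_three_shifts _ d (fun i => A *m (y i *: v i))
   (fun i => (y i.+1 * b i) *: v i) (fun i => (y i * acoef Es A i) *: v i)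
   (fun i => (y i * c i.+1) *: v i.+1)); last first.
  move=> [|i] hi; rewrite -scalemxAr hAv //=; case: ifP => _;
  by rewrite !(scalerDr, scalerA, scaler0, addr0, add0r).
rewrite (@sum_three_shifts _ d (fun i => T y i *: v i) (fun i => (c i.+1 * y i) *: v i.+1)
   (fun i => (acoef Es A i * y i) *: v i) (fun i => (b i * y i.+1) *: v i)); last first.
  move=> [|i] hi; rewrite /tridiag /=; case: ifP => _;
  by rewrite !(scalerDl, scale0r, addr0, add0r).
rewrite addrC [_ + \sum_(i < d.+1) _]addrC addrA.
by congr (_ + _ + _); apply: eq_bigr => i _; rewrite mulrC.
Qed.

(* Feasibility makes A* diagonal in the basis: A* v_i = theta*_i v_i. *)
Lemma Astar_lincomb (y : nat -> F) :
  Astar Es thetas *m lincomb v y = lincomb v (D y).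
Proof.
have Astar_v (i : 'I_d.+1) : Astar Es thetas *m v i = thetas i *: v i.
  have [z ->] := hvfeas (ltn_ord i).
  rewrite /Astar mulmx_suml (bigD1 i) //= big1 ?addr0 => [|j hj].
    by rewrite -scalemxAl mulmxA hEidem ?eqxx // -ltnS.
  by rewrite -scalemxAl mulmxA hEidem 1?ifN ?mul0mx ?scaler0 // -ltnS.
rewrite mulmx_sumr; apply: eq_bigr => i _.
by rewrite -scalemxAr Astar_v scalerA mulrC.
Qed.

(* Each (u_i(theta_m))_i is the coordinate vector of a theta_m-eigenvector
   of A: the recurrence for u_i also holds in the last row. *)
Lemma useq_eigen (m j : nat) :
  (m <= d)%N -> (j <= d)%N -> T (X m) j = theta m * X m j.
Proof.
move=> hm; have [z hz znz] := col_eigenvector (htheta_eig hm).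
have [y zy] := lincomb_surj v_basis z.
have hT j' : (j' <= d)%N -> T y j' = theta m * y j'.
  apply: (lincomb_inj v_basis (y' := fun i => theta m * y i)).
  by rewrite lincombZ -A_lincomb -zy hz.
have hy := recurrence_solution hb (fun j hj => hT j (ltnW hj)).
have y0 : y 0%N != 0.
  apply: contraNneq znz => y00; rewrite zy (@lincomb_ext _ _ _ _ (fun _ => 0)).
    by rewrite /lincomb big1 // => i _; rewrite scale0r.
  by move=> i hi; rewrite hy // y00 mul0r.
move=> hj; apply: (mulfI y0).
by rewrite -(tridiag_scale _ _ _ hy) // hT // hy // mulrCA.
Qed.

Lemma A_w (m : nat) : (m <= d)%N -> A *m w m = theta m *: w m.
Proof.
by move=> hm; rewrite A_lincomb -lincombZ; apply: lincomb_ext => i; apply: useq_eigen.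
Qed.

Lemma w_neq0 (m : nat) : w m != 0.
Proof.
apply/negP => /eqP wm0.
have h0 : lincomb v (X m) = lincomb v (fun _ => 0).
  by rewrite wm0 /lincomb big1 // => i _; rewrite scale0r.
by have := lincomb_inj v_basis h0 (leq0n d); rewrite useq0 => /eqP; rewrite oner_eq0.
Qed.

Lemma primidem_w (j m : nat) : (j <= d)%N -> (m <= d)%N ->
  primidem A theta j *m w m = if m == j then w m else 0.
Proof. by move=> hj hm; exact: (primidem_on htheta_inj hj hm (A_w hm)). Qed.

Lemma w_basis : basis_mx (fun m => w m) \in unitmx.
Proof.
apply/basis_mxP => al hal j hj.
have := congr1 (mulmx (primidem A theta j)) hal; rewrite mulmx0 mulmx_sumr.
rewrite (@sum_ord_pick _ _ (fun m => primidem A theta j *m (al m *: w m)) j) //.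
  rewrite -scalemxAr primidem_w // eqxx => /eqP.
  by rewrite scaler_eq0 (negbTE (w_neq0 j)) orbF => /eqP.
by move=> m hm /negbTE hmj; rewrite -scalemxAr primidem_w // hmj scaler0.
Qed.

Lemma useq_span (y : nat -> F) : exists al : nat -> F,
  forall i, (i <= d)%N -> y i = \sum_(m < d.+1) al m * X m i.
Proof.
have [al hal] := lincomb_surj w_basis (lincomb v y); exists al.
apply: (lincomb_inj v_basis (y' := fun i => \sum_(m < d.+1) al m * X m i)).
by rewrite (lincomb_comp v al (fun m => X m)).
Qed.

(* Eigenvectors of the self-adjoint T for distinct eigenvalues are orthogonal. *)
Lemma useq_orth (j m : nat) :
  (j <= d)%N -> (m <= d)%N -> j != m -> beta (X j) (X m) = 0.
Proof.
move=> hj hm hjm; have := tridiag_selfadjoint (acoef Es A) b hc (X j) (X m).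
rewrite (wform_ext _ _ (fun i hi => useq_eigen hm hi)) wform_scaler.
rewrite (wform_sym _ _ (T (X j))) (wform_ext _ _ (fun i hi => useq_eigen hj hi)).
rewrite wform_scaler (wform_sym _ _ (X m)) => /eqP.
rewrite -subr_eq0 -mulrBl mulf_eq0 subr_eq0 => /orP [/eqP /htheta_inj h | /eqP //].
by move: hjm; rewrite h ?eqxx.
Qed.

(* X_m is anisotropic, as X_m(0) = u_0 = 1 and k_0 = 1. *)
Lemma useq_norm (m : nat) : (m <= d)%N -> beta (X m) (X m) != 0.
Proof.
move=> hm; apply: (wform_norm_neq0 useq_orth useq_span hm (leq0n d)).
  exact: oner_neq0.
by rewrite useq0 oner_neq0.
Qed.

Lemma primidem_lincomb (r : nat) (y : nat -> F) : (r <= d)%N ->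
  primidem A theta r *m lincomb v y = (beta (X r) y / beta (X r) (X r)) *: w r.
Proof.
move=> hr; have [al hal] := useq_span y.
rewrite (wform_coef useq_orth hal hr) mulfK ?useq_norm // (lincomb_ext _ hal).
rewrite (lincomb_comp v al (fun m => X m)) mulmx_sumr.
rewrite (@sum_ord_pick _ _ (fun m => primidem A theta r *m (al m *: w m)) r) //.
  by rewrite -scalemxAr primidem_w ?eqxx.
by move=> m hm /negbTE hmr; rewrite -scalemxAr primidem_w // hmr scaler0.
Qed.

Lemma primidem_Astar_w (r j m : nat) : (r <= d)%N -> (j <= d)%N -> (m <= d)%N ->
  primidem A theta r *m Astar Es thetas *m primidem A theta j *m w m
  = if m == j then (beta (X r) (D (X j)) / beta (X r) (X r)) *: w r else 0.
Proof.
move=> hr hj hm; rewrite -mulmxA primidem_w //.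
case: eqP => [->|_]; last by rewrite mulmx0.
by rewrite -mulmxA Astar_lincomb primidem_lincomb.
Qed.

Lemma Delta_adj_iff (r j : nat) : (r <= d)%N -> (j <= d)%N ->
  Delta_adj A theta Es thetas r j <-> r <> j /\ beta (X j) (D (X r)) != 0.
Proof.
move=> hr hj; rewrite /Delta_adj wform_diag_sym.
set M := _ *m _ *m _; suff -> : (M != 0) = (beta (X r) (D (X j)) != 0) by [].
apply/idP/idP => [|hB]; last first.
  apply: contraNneq (w_neq0 r) => hM; have := primidem_Astar_w hr hj hj.
  rewrite -/M hM mul0mx eqxx => /esym/eqP.
  by rewrite scaler_eq0 mulf_eq0 invr_eq0 (negbTE hB) (negbTE (useq_norm hr)).
apply: contraNneq => hB; apply/eqP; apply: (mx_eq0_on_basis w_basis) => m hm.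
by rewrite primidem_Astar_w // hB mul0r scale0r; case: eqP.
Qed.

Lemma astar_eq (r : nat) : (r <= d)%N ->
  astar A theta Es thetas r = beta (X r) (D (X r)) / beta (X r) (X r).
Proof.
move=> hr; apply: (mxtrace_on_basis w_basis
  (lam := fun m => beta (X r) (D (X m)) / beta (X r) (X r)) hr) => m hm.
by rewrite -mulmxA Astar_lincomb primidem_lincomb.
Qed.

End FeasibleBasis.

(* Normalising a two-term relation t_i x_i = a0 x_i + g y_i between sequences
   with x_0 = y_0 = 1: evaluating at 0 forces g = t_0 - a0. *)
Lemma two_term_normalized (F : fieldType) (d : nat) (t x y : nat -> F) (a0 : F) :
  x 0%N = 1 -> y 0%N = 1 ->
  (exists2 g : F, g != 0 & forall i, (i <= d)%N -> t i * x i = a0 * x i + g * y i) <->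
  (a0 != t 0%N /\ forall i, (i <= d)%N -> y i = x i * ((t i - a0) / (t 0%N - a0))).
Proof.
move=> hx0 hy0; split=> [[g gnz h] | [ha0 h]].
  have hg : t 0%N - a0 = g.
    by have := h 0%N (leq0n d); rewrite hx0 hy0 !mulr1 => ->; ring.
  split=> [|i hi]; first by rewrite eq_sym -subr_eq0 hg.
  have -> : y i = (t i * x i - a0 * x i) / g by rewrite (h i hi); field.
  by rewrite hg; field.
have hc0 : t 0%N - a0 != 0 by rewrite subr_eq0 eq_sym.
by exists (t 0%N - a0) => // i hi; rewrite h //; field.
Qed.

Unset Implicit Arguments. Set Strict Implicit. Set Printing Implicit Defensive.

Theorem proposition7p14 (F : fieldType) (d : nat) (hd : (1 <= d)%N)
  (Es : nat -> 'M[F]_(d.+1)) (A : 'M[F]_(d.+1))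
  (theta thetas : nat -> F)
  (v : nat -> 'cV[F]_(d.+1)) (b c : nat -> F)
  (* Estar_i Estar_j = delta_ij Estar_i, rank Estar_i = 1 *)
  (hEidem : forall i j, (i <= d)%N -> (j <= d)%N ->
              Es i *m Es j = if i == j then Es i else 0)
  (hErank : forall i, (i <= d)%N -> \rank (Es i) = 1%N)
  (* tridiagonality of A with respect to the Estar_i *)
  (hAzero : forall i j, (i <= d)%N -> (j <= d)%N -> (1 < `|i - j|)%N ->
              Es i *m A *m Es j = 0)
  (hAnz : forall i j, (i <= d)%N -> (j <= d)%N -> `|i - j|%N = 1%N ->
              Es i *m A *m Es j != 0)
  (* A has d+1 distinct eigenvalues theta_0..theta_d in F *)
  (htheta_eig : forall i, (i <= d)%N -> eigenvalue A (theta i))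
  (htheta_inj : forall i j, (i <= d)%N -> (j <= d)%N -> theta i = theta j -> i = j)
  (* v_0..v_d is a feasible basis *)
  (hvbasis : (\matrix_(k < d.+1, i < d.+1) v i k ord0) \in unitmx)
  (hvfeas : forall i, (i <= d)%N -> exists w : 'cV[F]_(d.+1), v i = Es i *m w)
  (* A v_i = b_{i-1} v_{i-1} + a_i v_i + c_{i+1} v_{i+1}, v_{-1} = v_{d+1} = 0 *)
  (hAv : forall i, (i <= d)%N ->
     A *m v i = (if i is i'.+1 then b i' *: v i' else 0)
                + acoef Es A i *: v i
                + (if (i < d)%N then c i.+1 *: v i.+1 else 0))
  (hb : forall i, (i < d)%N -> b i != 0)
  (hc : forall i, (1 <= i <= d)%N -> c i != 0)
  (r s : nat) (hr : (r <= d)%N) (hs : (s <= d)%N) (hrs : r <> s) :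
  (forall j, (j <= d)%N -> (Delta_adj A theta Es thetas r j <-> j = s)) <->
  (astar A theta Es thetas r != thetas 0%N /\
   forall i, (i <= d)%N ->
     (upoly (acoef Es A) b c i).[theta s] =
     (upoly (acoef Es A) b c i).[theta r] *
       ((thetas i - astar A theta Es thetas r) / (thetas 0%N - astar A theta Es thetas r))).
Proof.
set X := fun m => useq (acoef Es A) b c (theta m).
have orth := useq_orth htheta_eig htheta_inj hvbasis hAv hb hc.
have span := useq_span htheta_eig htheta_inj hvbasis hAv hb.
have norm := useq_norm htheta_eig htheta_inj hvbasis hAv hb hc.
have adj := Delta_adj_iff thetas hEidem htheta_eig htheta_inj hvbasis hvfeas hAv hb hc.
(* a*_r is the X_r-coefficient of D X_r, so (ii) is the normalised form of
   "D X_r = a*_r X_r + g X_s with g <> 0" ... *)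
rewrite (astar_eq thetas hEidem htheta_eig htheta_inj hvbasis hvfeas hAv hb hc hr).
rewrite -(two_term_normalized d thetas _ (useq0 _ b c (theta r)) (useq0 _ b c (theta s))).
(* ... which says that X_s is the only X_j (j <> r) not orthogonal to D X_r,
   i.e. the only neighbour of r in Delta. *)
rewrite -(two_term_expansion orth span norm (fun i => thetas i * X r i) hr hs hrs).
by split=> H j hj; [apply: iff_trans (H j hj); apply: iff_sym | apply: iff_trans (H j hj)];
  apply: adj.
Qed.
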